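(* Consider the SAMBA process with a constant learning rate $\alpha\in(0,1)$ satisfying $\alpha<\frac{\Delta}{r^\star-\Delta}$. Let $$\tau(2):=\min\Big\{t\ge1:p_{a^\star}(t)>\tfrac12\Big\},\qquad E(2):=\Big\{\mathbf p\in\mathcal P:\ \tfrac{1-\alpha}{2}\le p_{a^\star}<\tfrac12\Big\}.$$ Then $$\sup_{\mathbf p\in E(2)}\mathbb E\big[\tau(2)\,\big|\,\mathbf p(0)=\mathbf p\big]<\infty.$$
   Context: $\mathcal P$ is the set of probability vectors on $\mathcal A$. Bandit model: $\mathcal A$ finite set of arms, $N=|\mathcal A|$; $R_a(t)\in\{0,1\}$ independent Bernoulli with mean $r_a$ for $a\in\mathcal A$, $t\in\mathbb Z_+$; unique optimal arm $a^\star$ with $r^\star:=r_{a^\star}>r_a$ for $a\ne a^\star$; $\Delta:=r^\star-\max_{a\ne a^\star}r_a>0$. SAMBA process with constant learning rate $\alpha$, started from $\mathbf p(0)$: at time $t$, $a_\star(t)$ is an arm maximizing $p_a(t)$ (ties broken uniformly at random), $p_\star(t)=p_{a_\star(t)}(t)$; one arm is played, arm $a$ with conditional probability $p_a(t)$ given the past; $I_a(t)$ indicates that $a$ is played, $I_\star(t)=I_{a_\star(t)}(t)$, $R_\star(t)=R_{a_\star(t)}(t)$. For $a\ne a_\star(t)$: $p_a(t+1)=p_a(t)+\alpha p_a(t)^2\big[\frac{I_a(t)R_a(t)}{p_a(t)}-\frac{I_\star(t)R_\star(t)}{p_\star(t)}\big]$, and $p_{a_\star(t)}(t+1)=1-\sum_{a\ne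 a_\star(t)}p_a(t+1)$. *)

From HB Require Import structures.
From mathcomp Require Import all_boot all_order all_algebra.
From mathcomp Require Import all_classical all_reals ereal.
Set Implicit Arguments. Unset Strict Implicit. Unset Printing Implicit Defensive.
Import Order.TTheory GRing.Theory Num.Theory.
Local Open Scope ring_scope.

(* The SAMBA process as a time-homogeneous Markov chain on probability
   vectors p : A -> R.  One step is driven by an outcome
   (l, a, b) : A * A * bool where
     l = the leader a_*(t) (a maximizer of p, chosen uniformly at random),
     a = the arm played (chosen with probability p_a),
     b = the reward R_a(t) of the played arm (Bernoulli(r_a), independent).
   Only the reward of the played arm enters the update (through I_a R_a). *)

Section Samba.
Variables (R : realType) (A : finType).

Definition Outcome := (A * A * bool)%type.

Definition simplex (p : A -> R) : Prop :=
  (forall a, 0 <= p a) /\ \sum_(a : A) p a = 1.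

Definition argmaxs (p : A -> R) : {set A} := [set l | [forall c, p c <= p l]].

Definition step_prob (r : A -> R) (p : A -> R) (o : Outcome) : R :=
  let: (l, a, b) := o in
  (if l \in argmaxs p then #|argmaxs p|%:R^-1 else 0)
  * p a * (if b then r a else 1 - r a).

Definition samba_upd (alpha : R) (p : A -> R) (o : Outcome) (c : A) : R :=
  let: (l, a, b) := o in
  p c + alpha * p c ^+ 2 *
        (((c == a) && b)%:R / p c - ((l == a) && b)%:R / p l).

Definition samba_next (alpha : R) (p : A -> R) (o : Outcome) : A -> R :=
  let: (l, a, b) := o in
  fun c => if c == l then 1 - \sum_(c' | c' != l) samba_upd alpha p o c'
           else samba_upd alpha p o c.

Fixpoint path_prob (r : A -> R) (alpha : R) (p : A -> R) (s : seq Outcome) : R :=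
  if s is o :: s' then step_prob r p o * path_prob r alpha (samba_next alpha p o) s'
  else 1.

(* min(tau(2), size s) along the path s, where
   tau(2) = min { t >= 1 : p_{astar}(t) > 1/2 } *)
Fixpoint tau2_trunc (astar : A) (alpha : R) (p : A -> R) (s : seq Outcome) : nat :=
  if s is o :: s' then
    let p' := samba_next alpha p o in
    if (2^-1 : R) < p' astar then 1%N else (tau2_trunc astar alpha p' s').+1
  else 0%N.

Definition Etau2_trunc (r : A -> R) (astar : A) (alpha : R) (N : nat)
    (p : A -> R) : R :=
  \sum_(s : N.-tuple Outcome) path_prob r alpha p s * (tau2_trunc astar alpha p s)%:R.

(* E[ tau(2) | p(0) = p ] = sup_N E[min(tau(2),N)]  (monotone convergence),
   as an extended real (possibly +oo) *)
Definition Etau2 (r : A -> R) (astar : A) (alpha : R) (p : A -> R) : \bar R :=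
  ereal_sup [set (Etau2_trunc r astar alpha N p)%:E | N in [set: nat]].

Definition E2 (astar : A) (alpha : R) : set (A -> R) :=
  [set p | simplex p /\ (1 - alpha) / 2 <= p astar /\ p astar < 2^-1].

End Samba.

From HB Require Import structures.
From mathcomp Require Import all_boot all_order all_algebra.
From mathcomp Require Import all_classical all_reals ereal.
From mathcomp Require Import ring lra.
Import Order.TTheory GRing.Theory Num.Theory.
Local Open Scope ring_scope.
Local Open Scope classical_set_scope.
Set Implicit Arguments. Unset Strict Implicit. Unset Printing Implicit Defensive.

(* The potential [lyap M q = M q - 1/q] of [q = p_{a*}] has a drift of at least
   [eps = alpha * margin / 2] per step while [q <= 1/2], where
   [margin = r*/(1+alpha) - (r* - Delta)] is positive exactly when
   [alpha (r* - Delta) < Delta], provided [M] is large.  When another arm [l] leads,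
   rewarding [a*] multiplies [q] by [1 + alpha], worth [alpha r*/(1+alpha)] through
   [-1/q], while rewarding [l] removes [alpha q^2/p_l], which costs at most
   [alpha (r_l + O(q))]; the quadratic gain [alpha M Delta q^2] absorbs the [O(q)].
   When [a*] leads, the linear part [M q] gains [alpha M sum_{a <> a*} p_a^2 (r* - r_a)],
   which beats the curvature of [-1/q] and is of order [1/|A|] since [q <= 1/2].
   As [lyap M <= M] on [(0, 1]], the truncated hitting times satisfy
   [E[min(tau, N)] <= (M - lyap M q(0)) / eps], uniformly bounded on [E(2)]
   because there [q(0) >= (1 - alpha)/2]. *)

Section Lyapunov.
Variables (R : realType) (M : R).
Hypothesis M_ge0 : 0 <= M.

Definition lyap (q : R) : R := M * q - q^-1.

Lemma lyap_le (q : R) : 0 < q -> q <= 1 -> lyap q <= M.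
Proof.
move=> q_gt0 q_le1; rewrite /lyap.
have : 0 < q^-1 by rewrite invr_gt0.
have : M * q <= M by rewrite -[leRHS]mulr1 ler_wpM2l.
lra.
Qed.

Lemma lyap_sub (q y : R) : q != 0 -> q - y != 0 ->
  lyap (q - y) - lyap q = - y * ((q * (q - y))^-1 + M).
Proof. by move=> q_neq0 qy_neq0; rewrite /lyap; field; rewrite q_neq0 qy_neq0. Qed.

Lemma lyap_add_gain (q t : R) : 0 < q -> 0 <= t ->
  M * t <= q * (lyap (q + t / q) - lyap q).
Proof.
move=> q_gt0 t_ge0.
have qt_gt0 : 0 < q + t / q by rewrite ltr_wpDr // divr_ge0 // ltW.
have -> : q * (lyap (q + t / q) - lyap q) = M * t + t * (q * (q + t / q))^-1.
  by rewrite /lyap; field; rewrite !gt_eqF //; nra.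
by rewrite lerDl mulr_ge0 // invr_ge0 mulr_ge0 // ltW.
Qed.

Variable alpha : R.
Hypotheses (alpha_gt0 : 0 < alpha) (alpha_lt1 : alpha < 1).

Lemma lyap_scale_gain (q : R) : 0 < q ->
  q * (lyap (q * (1 + alpha)) - lyap q) = alpha / (1 + alpha) + alpha * M * q ^+ 2.
Proof. by move=> q_gt0; rewrite /lyap; field; rewrite !gt_eqF // addr_gt0. Qed.

Lemma lyap_leader_loss (n q x ra : R) : 0 < q -> 0 <= x <= q -> 1 <= n * q ->
    0 <= ra <= 1 ->
  - alpha * x ^+ 2 * (n ^+ 2 / (1 - alpha) + M * ra)
  <= x * ra * (lyap (q - alpha * x) - lyap q).
Proof.
move=> q_gt0 /andP[x_ge0 x_le] nq_ge1 /andP[ra_ge0 ra_le1].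
have ax_le : alpha * x <= alpha * q by rewrite ler_wpM2l // ltW.
have qx_ge : (1 - alpha) * q <= q - alpha * x by lra.
have qx_gt0 : 0 < q - alpha * x by apply: lt_le_trans qx_ge; rewrite mulr_gt0 ?subr_gt0.
have n_gt0 : 0 < n by nra.
(* the shrunken coordinate keeps a (1 - alpha) fraction of [q >= 1 / n] *)
have den_ge : 1 - alpha <= n ^+ 2 * (q * (q - alpha * x)).
  have : 1 - alpha <= n * (q - alpha * x) by nra.
  have : 0 <= n * (q - alpha * x) by nra.
  nra.
have inv_le : (q * (q - alpha * x))^-1 <= n ^+ 2 / (1 - alpha).
  by rewrite ler_pdivlMr ?subr_gt0 // mulrC ler_pdivrMr ?mulr_gt0.
have inv_ge0 : 0 <= (q * (q - alpha * x))^-1 by rewrite invr_ge0 mulr_ge0 ?ltW.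
have ra_inv_le := le_trans (ler_piMl inv_ge0 ra_le1) inv_le.
have : 0 <= alpha * x ^+ 2 by rewrite mulr_ge0 ?sqr_ge0 ?ltW.
rewrite lyap_sub ?gt_eqF //; nra.
Qed.

Lemma lyap_nonleader_loss (n P q rl : R) : 0 < q <= P -> 1 <= n * P -> 0 <= rl <= 1 ->
  - alpha * (rl + alpha * n / (1 - alpha) * q + M * rl * q ^+ 2)
  <= P * rl * (lyap (q - alpha * q ^+ 2 / P) - lyap q).
Proof.
move=> /andP[q_gt0 q_le] nP_ge1 /andP[rl_ge0 rl_le1].
have P_gt0 : 0 < P by apply: lt_le_trans q_le.
have n_gt0 : 0 < n by nra.
have aq_le : alpha * q <= alpha * P by rewrite ler_wpM2l // ltW.
have Pq_ge : (1 - alpha) * P <= P - alpha * q by lra.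
have Pq_gt0 : 0 < P - alpha * q by apply: lt_le_trans Pq_ge; rewrite mulr_gt0 ?subr_gt0.
have -> : P * rl * (lyap (q - alpha * q ^+ 2 / P) - lyap q)
          = - alpha * (rl * (1 + alpha * q / (P - alpha * q)) + M * rl * q ^+ 2).
  by rewrite /lyap; field; rewrite !gt_eqF //; nra.
have inv_le : (P - alpha * q)^-1 <= n / (1 - alpha).
  rewrite ler_pdivlMr ?subr_gt0 // mulrC ler_pdivrMr //.
  have := ler_wpM2l (ltW n_gt0) Pq_ge; nra.
have ratio_ge0 : 0 <= alpha * q / (P - alpha * q) by rewrite divr_ge0 ?mulr_ge0 ?ltW.
have ratio_le : alpha * q / (P - alpha * q) <= alpha * n / (1 - alpha) * q.
  have -> : alpha * n / (1 - alpha) * q = alpha * q * (n / (1 - alpha)) by ring.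
  by apply: ler_wpM2l => //; rewrite mulr_ge0 // ltW.
have : rl * (alpha * q / (P - alpha * q)) <= alpha * n / (1 - alpha) * q by nra.
rewrite ler_nM2l ?oppr_lt0 // mulrDr mulr1; lra.
Qed.

End Lyapunov.

Section Simplex.
Variables (R : realType) (A : finType).
Implicit Types (p : A -> R) (a c l : A).

Lemma argmaxs_le p l c : l \in argmaxs p -> p c <= p l.
Proof. by rewrite inE => /forallP. Qed.

Lemma simplex_sum_neq p l : simplex p -> \sum_(c | c != l) p c = 1 - p l.
Proof. by move=> [_ p1]; rewrite -p1 [in RHS](bigD1 l) //= addrC addrK. Qed.

Lemma simplex_le1 p c : simplex p -> p c <= 1.
Proof.
move=> [p_ge0 <-]; rewrite (bigD1 c) //= lerDl.
by apply: sumr_ge0 => i _; apply: p_ge0.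
Qed.

Lemma argmaxs_mass p l : simplex p -> l \in argmaxs p -> 1 <= #|A|%:R * p l.
Proof.
move=> [_ p1] l_max; rewrite mulr_natl -sumr_const -p1.
by apply: ler_sum => c _; apply: argmaxs_le.
Qed.

Lemma argmaxs_gt0 p l : simplex p -> l \in argmaxs p -> 0 < p l.
Proof.
move=> sp l_max; have [p_ge0 _] := sp; rewrite lt0r p_ge0 andbT.
by apply: contraTneq (argmaxs_mass sp l_max) => ->; rewrite mulr0 ler10.
Qed.

Lemma argmaxs_nonempty p : simplex p -> exists l, l \in argmaxs p.
Proof.
move=> [_ p1]; case: (pickP (fun _ : A => true)) => [a0 _ | A_empty]; last first.
  by move: p1; rewrite big_pred0 // => /eqP; rewrite eq_sym oner_eq0.
case: (@arg_maxP _ _ _ a0 predT p) => // l _ l_max.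
by exists l; rewrite inE; apply/forallP => c; apply: l_max.
Qed.

Lemma sum_argmaxs_inv p : simplex p ->
  \sum_(l in argmaxs p) #|argmaxs p|%:R^-1 = 1 :> R.
Proof.
move=> /argmaxs_nonempty [l l_max].
rewrite sumr_const -[LHS]mulr_natr mulVf // pnatr_eq0 -lt0n.
by apply/card_gt0P; exists l.
Qed.

Lemma sum_sqr_others_ge p a : simplex p -> p a <= 2^-1 ->
  (4 * #|A|%:R)^-1 <= \sum_(c | c != a) p c ^+ 2.
Proof.
move=> sp pa_le; set n : R := #|A|%:R.
have n_gt0 : 0 < n by rewrite ltr0n; apply/card_gt0P; exists a.
set t := (2 * n)^-1.
have t_gt0 : 0 < t by rewrite invr_gt0 mulr_gt0.
have sq_ge0 : 0 <= \sum_(c | c != a) (p c - t) ^+ 2.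
  by apply: sumr_ge0 => c _; apply: sqr_ge0.
have sq_expand : \sum_(c | c != a) (p c - t) ^+ 2 =
    \sum_(c | c != a) p c ^+ 2 - 2 * t * (1 - p a) + \sum_(c | c != a) t ^+ 2.
  rewrite -simplex_sum_neq // mulr_sumr -sumrB -big_split /=.
  by apply: eq_bigr => c _; ring.
have tsq_le : \sum_(c | c != a) t ^+ 2 <= n * t ^+ 2.
  rewrite /n mulr_natl -sumr_const [leRHS](bigD1 a) //= lerDr; exact: sqr_ge0.
have -> : (4 * n)^-1 = t / 2 by rewrite /t; field; rewrite gt_eqF.
have ntt : n * t ^+ 2 = t / 2 by rewrite /t; field; rewrite gt_eqF.
nra.
Qed.

End Simplex.

Section Transition.
Variables (R : realType) (A : finType) (alpha : R).
Implicit Types (p : A -> R) (a c l : A).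

Lemma samba_next_noreward p l a c : simplex p ->
  samba_next alpha p (l, a, false) c = p c.
Proof.
move=> sp; rewrite /samba_next /samba_upd.
have upd c' : p c' + alpha * p c' ^+ 2 *
    (((c' == a) && false)%:R / p c' - ((l == a) && false)%:R / p l) = p c'.
  by rewrite !andbF !mul0r subr0 mulr0 addr0.
case: eqP => [->|_]; last exact: upd.
by rewrite (eq_bigr _ (fun c' _ => upd c')) simplex_sum_neq // subKr.
Qed.

Lemma samba_next_reward_other p l a c : simplex p -> a != l ->
  samba_next alpha p (l, a, true) c =
  if c == l then p l - alpha * p a else if c == a then p a * (1 + alpha) else p c.
Proof.
move=> sp a_neq_l; rewrite /samba_next /samba_upd.
have upd c' : p c' + alpha * p c' ^+ 2 *
    (((c' == a) && true)%:R / p c' - ((l == a) && true)%:R / p l)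
    = p c' + (if c' == a then alpha * p a else 0).
  rewrite !andbT (eq_sym l) (negbTE a_neq_l) /= mul0r subr0.
  case: eqVneq => [->|_] /=; last by rewrite mul0r mulr0 addr0.
  congr (_ + _); rewrite -mulrA; congr (_ * _).
  have [->|pa_neq0] := eqVneq (p a) 0; first by rewrite expr0n /= mul0r.
  by rewrite mul1r expr2 -mulrA mulfV ?mulr1.
have [_|c_neq_l] := eqVneq c l.
  rewrite (eq_bigr _ (fun c' _ => upd c')) big_split /= simplex_sum_neq //.
  rewrite (bigD1 a) //= eqxx big1 ?addr0; first by ring.
  by move=> c' /andP[_ /negbTE ->].
by rewrite upd; case: eqVneq => [->|]; rewrite ?addr0 //; ring.
Qed.

Lemma samba_next_reward_leader p l c : simplex p ->
  samba_next alpha p (l, l, true) c =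
  if c == l then p l + alpha * (\sum_(c' | c' != l) p c' ^+ 2) / p l
  else p c - alpha * p c ^+ 2 / p l.
Proof.
move=> sp; rewrite /samba_next /samba_upd.
have upd c' : c' != l -> p c' + alpha * p c' ^+ 2 *
    (((c' == l) && true)%:R / p c' - ((l == l) && true)%:R / p l)
    = p c' - alpha * p c' ^+ 2 / p l.
  by move=> /negbTE c'_neq_l; rewrite c'_neq_l eqxx /= mul0r; ring.
case: (eqVneq c l) => [_|c_neq_l] /=; last by rewrite eqxx /= mul0r; ring.
rewrite (eq_bigr _ upd) sumrB simplex_sum_neq // -mulr_suml -mulr_sumr; ring.
Qed.

Lemma samba_next_sum1 p o : \sum_c samba_next alpha p o c = 1.
Proof.
case: o => [[l a] b]; rewrite (bigD1 l) //= eqxx.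
rewrite [X in _ + X](eq_bigr (samba_upd alpha p (l, a, b))) ?subrK //.
by move=> c /negbTE ->.
Qed.

Hypotheses (alpha_gt0 : 0 < alpha) (alpha_lt1 : alpha < 1).

Lemma samba_next_ge p l a b c : simplex p -> l \in argmaxs p ->
  (1 - alpha) * p c <= samba_next alpha p (l, a, b) c.
Proof.
move=> sp l_max; have [p_ge0 _] := sp; have pl_gt0 := argmaxs_gt0 sp l_max.
have ap_ge0 x : 0 <= alpha * p x by rewrite mulr_ge0 // ltW.
have := ap_ge0 c; case: b; last by rewrite samba_next_noreward //; lra.
have [->|a_neq_l] := eqVneq a l.
  rewrite samba_next_reward_leader //; case: eqVneq => [->|_] apc_ge0.
    suff : 0 <= alpha * (\sum_(c' | c' != l) p c' ^+ 2) / p l by lra.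
    by rewrite divr_ge0 ?mulr_ge0 ?sumr_ge0 ?ltW // => c' _; apply: sqr_ge0.
  suff : p c ^+ 2 / p l <= p c by rewrite -(ler_pM2l alpha_gt0) mulrA; lra.
  by rewrite expr2 -mulrA ler_piMr ?p_ge0 // ler_pdivrMr // mul1r argmaxs_le.
rewrite samba_next_reward_other //; case: eqVneq => [->|_] apc_ge0.
  suff : alpha * p a <= alpha * p l by lra.
  by rewrite ler_pM2l // argmaxs_le.
by move: apc_ge0; case: eqVneq => [->|_]; lra.
Qed.

Lemma samba_next_simplex p l a b : simplex p -> l \in argmaxs p ->
  simplex (samba_next alpha p (l, a, b)).
Proof.
move=> sp l_max; split=> [c|]; last exact: samba_next_sum1.
apply: le_trans (samba_next_ge _ _ _ sp l_max).
by case: sp => p_ge0 _; rewrite mulr_ge0 ?subr_ge0 ?(ltW alpha_lt1).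
Qed.

End Transition.

Lemma big_tuple_cons (V : nmodType) (T : finType) n (F : n.+1.-tuple T -> V) :
  \sum_(s : n.+1.-tuple T) F s = \sum_(x : T) \sum_(s : n.-tuple T) F [tuple of x :: s].
Proof.
rewrite pair_bigA (reindex (fun xs : T * n.-tuple T => [tuple of xs.1 :: xs.2])) //=.
exists (fun s : n.+1.-tuple T => (thead s, [tuple of behead s])) => [[x s] _|s _].
  by congr pair; apply/val_inj.
by apply/val_inj; case: s => -[].
Qed.

Section OneStep.
Variables (R : realType) (A : finType) (r : A -> R).
Hypothesis r_range : forall a, 0 <= r a <= 1.
Implicit Types (p : A -> R) (f g : Outcome A -> R).

Definition step_mean p f : R := \sum_o step_prob r p o * f o.

Lemma step_meanE p f : step_mean p f =
  \sum_(l in argmaxs p) #|argmaxs p|%:R^-1 *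
    \sum_a p a * (r a * f (l, a, true) + (1 - r a) * f (l, a, false)).
Proof.
have -> : step_mean p f =
    \sum_l \sum_a \sum_b step_prob r p (l, a, b) * f (l, a, b).
  by rewrite pair_bigA pair_bigA; apply: eq_bigr => -[[l a] b].
rewrite [RHS]big_mkcond; apply: eq_bigr => l _; case: ifP => l_max.
  rewrite mulr_sumr; apply: eq_bigr => a _.
  by rewrite big_bool /step_prob l_max /=; ring.
by rewrite big1 // => a _; rewrite big1 // => b _; rewrite /step_prob l_max !mul0r.
Qed.

Lemma step_prob_ge0 p o : simplex p -> 0 <= step_prob r p o.
Proof.
case: o => [[l a] b] [p_ge0 _]; have /andP[ra_ge0 ra_le1] := r_range a.
rewrite /step_prob !mulr_ge0 //; first by case: ifP; rewrite ?invr_ge0.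
by case: b; rewrite ?subr_ge0.
Qed.

Lemma ler_step_mean p f g : simplex p ->
    (forall l a b, l \in argmaxs p -> f (l, a, b) <= g (l, a, b)) ->
  step_mean p f <= step_mean p g.
Proof.
move=> sp fg; apply: ler_sum => -[[l a] b] _.
case l_max : (l \in argmaxs p); last by rewrite /step_prob l_max !mul0r.
by rewrite ler_wpM2l ?step_prob_ge0 ?fg.
Qed.

Lemma eq_step_mean p f g : simplex p ->
    (forall l a b, l \in argmaxs p -> f (l, a, b) = g (l, a, b)) ->
  step_mean p f = step_mean p g.
Proof.
by move=> sp fg; apply/eqP; rewrite eq_le !ler_step_mean // => l a b /fg ->.
Qed.

Lemma step_mean_cst p x : simplex p -> step_mean p (fun=> x) = x.
Proof.
move=> sp; have inner : \sum_a p a * (r a * x + (1 - r a) * x) = x.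
  transitivity (\sum_a p a * x); first by apply: eq_bigr => a _; ring.
  by rewrite -mulr_suml; case: sp => _ ->; rewrite mul1r.
rewrite step_meanE; under eq_bigr do rewrite inner.
by rewrite -mulr_suml sum_argmaxs_inv // mul1r.
Qed.

Lemma step_mean_affine p x y f : simplex p ->
  step_mean p (fun o => x + y * f o) = x + y * step_mean p f.
Proof.
move=> sp; rewrite -{2}(step_mean_cst x sp) /step_mean mulr_sumr -big_split /=.
by apply: eq_bigr => o _; ring.
Qed.

End OneStep.

Section Paths.
Variables (R : realType) (A : finType) (r : A -> R) (astar : A) (alpha : R).
Hypotheses (r_range : forall a, 0 <= r a <= 1)
  (alpha_gt0 : 0 < alpha) (alpha_lt1 : alpha < 1).
Implicit Types (p : A -> R).

Lemma path_prob_sum1 N p : simplex p ->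
  \sum_(s : N.-tuple (Outcome A)) path_prob r alpha p s = 1.
Proof.
elim: N p => [|N IH] p sp.
  rewrite (eq_bigr (fun=> 1)) => [|s _]; last by rewrite tuple0.
  by rewrite sumr_const card_tuple expn0.
rewrite big_tuple_cons.
under eq_bigr do rewrite -mulr_sumr.
rewrite -/(step_mean r p _) -[RHS](step_mean_cst r 1 sp).
apply: eq_step_mean => // l a b l_max.
by apply: IH; apply: samba_next_simplex.
Qed.

Lemma Etau2_trunc_succ N p : simplex p ->
  Etau2_trunc r astar alpha N.+1 p =
  step_mean r p (fun o => 1 + (if 2^-1 < samba_next alpha p o astar then 0
                              else Etau2_trunc r astar alpha N (samba_next alpha p o))).
Proof.
move=> sp; rewrite /Etau2_trunc big_tuple_cons.
under eq_bigr => o _.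
  rewrite (_ : \sum_s _ = step_prob r p o * (\sum_(s : N.-tuple (Outcome A))
      path_prob r alpha (samba_next alpha p o) s
    + (if 2^-1 < samba_next alpha p o astar then 0
       else Etau2_trunc r astar alpha N (samba_next alpha p o)))); last first.
    rewrite /Etau2_trunc /=; case: ifP => _.
      by rewrite addr0 mulr_sumr; apply: eq_bigr => s _; rewrite mulr1.
    rewrite -big_split mulr_sumr; apply: eq_bigr => s _ /=.
    by rewrite -addn1 natrD; ring.
  over.
rewrite -/(step_mean r p _); apply: eq_step_mean => // l a b l_max.
by rewrite path_prob_sum1 //; apply: samba_next_simplex.
Qed.

End Paths.

Lemma half_le_quadratic (R : realFieldType) (d K c q : R) : 0 < d ->
  K ^+ 2 / (2 * d) <= c -> d / 2 <= d - K * q + c * q ^+ 2.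
Proof.
move=> d_gt0 c_ge.
have : K ^+ 2 / (2 * d) * q ^+ 2 <= c * q ^+ 2 by rewrite ler_wpM2r ?sqr_ge0.
have : 0 <= (K * q - d) ^+ 2 / (2 * d) by rewrite divr_ge0 ?sqr_ge0 ?mulr_ge0 ?ltW.
have -> : (K * q - d) ^+ 2 / (2 * d) = K ^+ 2 / (2 * d) * q ^+ 2 - K * q + d / 2.
  by field; rewrite gt_eqF.
lra.
Qed.

Lemma drift_margin_gt0 (R : realFieldType) (alpha rs Delta : R) : 0 < alpha ->
  alpha * (rs - Delta) < Delta -> 0 < rs / (1 + alpha) - (rs - Delta).
Proof.
move=> alpha_gt0 alpha_small.
have -> : rs / (1 + alpha) - (rs - Delta) = (Delta - alpha * (rs - Delta)) / (1 + alpha).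
  by field; rewrite gt_eqF // addr_gt0.
by rewrite divr_gt0 ?subr_gt0 // addr_gt0.
Qed.

Section Drift.
Variables (R : realType) (A : finType) (r : A -> R) (astar : A) (alpha M Delta : R).
Hypotheses (r_range : forall a, 0 <= r a <= 1)
  (alpha_gt0 : 0 < alpha) (alpha_lt1 : alpha < 1) (M_ge0 : 0 <= M)
  (r_gap : forall a, a != astar -> r a <= r astar - Delta).

Let n : R := #|A|%:R.
Let margin : R := r astar / (1 + alpha) - (r astar - Delta).
Hypotheses (margin_gt0 : 0 < margin)
  (M_nonleader : (alpha * n / (1 - alpha)) ^+ 2 / (2 * margin) <= M * Delta)
  (M_leader : n ^+ 2 / (1 - alpha) + 2 * n * margin <= M * Delta).
Implicit Types (p : A -> R) (l : A).

(* Unrewarded steps leave [p] unchanged, so this is the expected change of the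
   potential when [l] leads. *)
Definition lyap_gain p l : R := \sum_a p a * r a *
  (lyap M (samba_next alpha p (l, a, true) astar) - lyap M (p astar)).

Lemma lyap_gain_nonleader p l : simplex p -> 0 < p astar ->
  l \in argmaxs p -> l != astar -> alpha * (margin / 2) <= lyap_gain p l.
Proof.
move=> sp q_gt0 l_max l_neq; have astar_neq := l_neq; rewrite eq_sym in astar_neq.
rewrite /lyap_gain (bigD1 astar) // (bigD1 l) // big1 ?addr0 => [|a]; last first.
  case/andP=> a_neq_astar a_neq_l; rewrite samba_next_reward_other //.
  by rewrite (negbTE astar_neq) eq_sym (negbTE a_neq_astar) subrr mulr0.
rewrite samba_next_reward_other // (negbTE astar_neq) eqxx.
rewrite samba_next_reward_leader // (negbTE astar_neq).
have qP : 0 < p astar <= p l by rewrite q_gt0 argmaxs_le.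
have loss := lyap_nonleader_loss M alpha_gt0 alpha_lt1 qP
  (argmaxs_mass sp l_max) (r_range l); rewrite -/n in loss.
rewrite mulrAC lyap_scale_gain //= addr0.
have quad := half_le_quadratic (p astar) margin_gt0 M_nonleader.
have gap : M * p astar ^+ 2 * Delta <= M * p astar ^+ 2 * (r astar - r l).
  by rewrite ler_wpM2l ?mulr_ge0 ?sqr_ge0 //; have := r_gap l_neq; lra.
have key : margin / 2 <= r astar / (1 + alpha) - r l - alpha * n / (1 - alpha) * p astar
    + M * p astar ^+ 2 * (r astar - r l).
  by have := r_gap l_neq; rewrite /margin in quad *; lra.
rewrite -(ler_pM2l alpha_gt0) in key.
lra.
Qed.

Lemma lyap_gain_leader p : simplex p -> 0 < p astar -> p astar <= 2^-1 ->
  astar \in argmaxs p -> alpha * (margin / 2) <= lyap_gain p astar.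
Proof.
move=> sp q_gt0 q_le astar_max; have [p_ge0 _] := sp.
have n_gt0 : 0 < n by rewrite ltr0n; apply/card_gt0P; exists astar.
set S := \sum_(c | c != astar) p c ^+ 2.
have gain_astar : M * r astar * (alpha * S) <= p astar * r astar *
    (lyap M (samba_next alpha p (astar, astar, true) astar) - lyap M (p astar)).
  rewrite samba_next_reward_leader // eqxx /= -/S mulrAC [leRHS]mulrAC.
  have /andP[r_ge0 _] := r_range astar.
  rewrite ler_wpM2r // lyap_add_gain // mulr_ge0 ?sumr_ge0 ?ltW // => c _.
  exact: sqr_ge0.
have loss_others :
    \sum_(a | a != astar) - alpha * p a ^+ 2 * (n ^+ 2 / (1 - alpha) + M * r a)
    <= \sum_(a | a != astar) p a * r a *
       (lyap M (samba_next alpha p (astar, a, true) astar) - lyap M (p astar)).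
  apply: ler_sum => a a_neq; rewrite samba_next_reward_other // eqxx /=.
  have pa_le : 0 <= p a <= p astar by rewrite p_ge0 argmaxs_le.
  have := lyap_leader_loss M alpha_gt0 alpha_lt1 q_gt0 pa_le
    (argmaxs_mass sp astar_max) (r_range a).
  by rewrite -/n.
have others_ge : 2 * n * margin <= M * Delta - n ^+ 2 / (1 - alpha).
  by rewrite lerBrDr addrC.
have total : alpha * (margin / 2) <= M * r astar * (alpha * S)
    + \sum_(a | a != astar) - alpha * p a ^+ 2 * (n ^+ 2 / (1 - alpha) + M * r a).
  have -> : M * r astar * (alpha * S)
      + \sum_(a | a != astar) - alpha * p a ^+ 2 * (n ^+ 2 / (1 - alpha) + M * r a)
      = \sum_(a | a != astar)
          alpha * p a ^+ 2 * (M * (r astar - r a) - n ^+ 2 / (1 - alpha)).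
    by rewrite /S !mulr_sumr -big_split; apply: eq_bigr => a _ /=; ring.
  apply: le_trans (_ : _ <= \sum_(a | a != astar) alpha * p a ^+ 2 * (2 * n * margin)) _.
    rewrite -mulr_suml -mulr_sumr -/S -mulrA ler_pM2l //.
    have -> : margin / 2 = (4 * n)^-1 * (2 * n * margin) by field; rewrite gt_eqF.
    by rewrite ler_pM2r ?mulr_gt0 //; apply: sum_sqr_others_ge.
  apply: ler_sum => a a_neq; apply: ler_wpM2l; first by rewrite mulr_ge0 ?sqr_ge0 ?ltW.
  apply: le_trans others_ge _; rewrite lerD2r; apply: ler_wpM2l => //.
  by have := r_gap a_neq; lra.
rewrite /lyap_gain (bigD1 astar) //; apply: le_trans total _.
exact: lerD gain_astar loss_others.
Qed.

Lemma lyap_drift p : simplex p -> 0 < p astar -> p astar <= 2^-1 ->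
  lyap M (p astar) + alpha * (margin / 2)
  <= step_mean r p (fun o => lyap M (samba_next alpha p o astar)).
Proof.
move=> sp q_gt0 q_le; rewrite step_meanE.
have -> : lyap M (p astar) + alpha * (margin / 2) = \sum_(l in argmaxs p)
    #|argmaxs p|%:R^-1 * (lyap M (p astar) + alpha * (margin / 2)).
  by rewrite -mulr_suml sum_argmaxs_inv // mul1r.
apply: ler_sum => l l_max; apply: ler_wpM2l; first by rewrite invr_ge0.
have -> : \sum_a p a * (r a * lyap M (samba_next alpha p (l, a, true) astar)
      + (1 - r a) * lyap M (samba_next alpha p (l, a, false) astar))
    = lyap M (p astar) + lyap_gain p l.
  transitivity (\sum_a (p a * lyap M (p astar) + p a * r a *
      (lyap M (samba_next alpha p (l, a, true) astar) - lyap M (p astar)))).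
    by apply: eq_bigr => a _; rewrite samba_next_noreward //; ring.
  by rewrite big_split -mulr_suml; case: (sp) => _ ->; rewrite mul1r.
rewrite lerD2l; have [l_eq|l_neq] := eqVneq l astar.
  by rewrite l_eq in l_max *; apply: lyap_gain_leader.
exact: lyap_gain_nonleader.
Qed.

Let eps : R := alpha * (margin / 2).

Lemma Etau2_trunc_le N p : simplex p -> 0 < p astar -> p astar <= 2^-1 ->
  Etau2_trunc r astar alpha N p <= (M - lyap M (p astar)) / eps.
Proof.
have eps_gt0 : 0 < eps by rewrite mulr_gt0 ?divr_gt0.
have bound_ge0 p' : simplex p' -> 0 < p' astar -> 0 <= (M - lyap M (p' astar)) / eps.
  move=> sp' q'_gt0; rewrite divr_ge0 ?(ltW eps_gt0) // subr_ge0.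
  exact: (lyap_le M_ge0 q'_gt0 (simplex_le1 astar sp')).
elim: N p => [|N IH] p sp q_gt0 q_le.
  by rewrite /Etau2_trunc big1 ?bound_ge0 // => s _; rewrite tuple0 mulr0.
rewrite Etau2_trunc_succ //.
set V := fun o => lyap M (samba_next alpha p o astar).
apply: le_trans (_ : _ <= step_mean r p (fun o => (1 + M / eps) + (- eps^-1) * V o)) _.
  apply: ler_step_mean => // l a b l_max.
  have sp' := samba_next_simplex alpha_gt0 alpha_lt1 a b sp l_max.
  have q'_gt0 : 0 < samba_next alpha p (l, a, b) astar.
    apply: lt_le_trans (samba_next_ge alpha_gt0 a b astar sp l_max).
    by rewrite mulr_gt0 ?subr_gt0.
  have -> : 1 + M / eps + - eps^-1 * V (l, a, b) = 1 + (M - V (l, a, b)) / eps.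
    by rewrite /V; ring.
  rewrite lerD2l; case: ifP => [_|/negbT]; first exact: bound_ge0.
  by rewrite -leNgt => q'_le; apply: IH.
rewrite step_mean_affine //.
have epsV_gt0 : 0 < eps^-1 by rewrite invr_gt0.
have := lyap_drift sp q_gt0 q_le; rewrite -/V -/eps -(ler_pM2l epsV_gt0).
have -> : eps^-1 * (lyap M (p astar) + eps) = lyap M (p astar) / eps + 1.
  by field; rewrite gt_eqF.
lra.
Qed.

Lemma Etau2_le p : simplex p -> 0 < p astar -> p astar <= 2^-1 ->
  (Etau2 r astar alpha p <= ((M - lyap M (p astar)) / eps)%:E)%E.
Proof.
move=> sp q_gt0 q_le; apply: ge_ereal_sup => _ [N _ <-].
by rewrite lee_fin Etau2_trunc_le.
Qed.

Lemma Etau2_E2_le :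
  (ereal_sup [set Etau2 r astar alpha p | p in E2 astar alpha]
   <= ((M + 2 / (1 - alpha)) / eps)%:E)%E.
Proof.
apply: ge_ereal_sup => _ [p [sp [q_ge q_lt]] <-].
have q_gt0 : 0 < p astar by apply: lt_le_trans q_ge; rewrite divr_gt0 ?subr_gt0.
apply: le_trans (Etau2_le sp q_gt0 (ltW q_lt)) _.
rewrite lee_fin ler_pM2r ?invr_gt0 ?mulr_gt0 ?divr_gt0 // lerD2l.
have inv_le : (p astar)^-1 <= 2 / (1 - alpha).
  by rewrite -invf_div lef_pV2 ?posrE // divr_gt0 ?subr_gt0.
have : 0 <= M * p astar by rewrite mulr_ge0 // ltW.
rewrite /lyap; lra.
Qed.

End Drift.

Theorem corollary7 (R : realType) (A : finType) (r : A -> R) (astar : A)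
    (Delta alpha : R) :
  (forall a, 0 <= r a <= 1) ->
  (forall a, a != astar -> r a < r astar) ->
  (forall a, a != astar -> r a <= r astar - Delta) ->
  (exists2 a, a != astar & r a = r astar - Delta) ->
  0 < alpha < 1 ->
  alpha * (r astar - Delta) < Delta ->
  (ereal_sup [set Etau2 r astar alpha p | p in E2 astar alpha] < +oo)%E.
Proof.
move=> r_range r_lt r_gap [a0 a0_neq ra0] /andP[alpha_gt0 alpha_lt1] alpha_small.
have Delta_gt0 : 0 < Delta by have := r_lt a0 a0_neq; lra.
pose n : R := #|A|%:R.
pose margin := r astar / (1 + alpha) - (r astar - Delta).
have margin_gt0 : 0 < margin := drift_margin_gt0 alpha_gt0 alpha_small.
pose c1 := (alpha * n / (1 - alpha)) ^+ 2 / (2 * margin).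
pose c2 := n ^+ 2 / (1 - alpha) + 2 * n * margin.
have c1_ge0 : 0 <= c1 by rewrite divr_ge0 ?sqr_ge0 // mulr_ge0 // ltW.
have n_ge0 : 0 <= n by rewrite ler0n.
have c2_ge0 : 0 <= c2.
  have : 0 <= n ^+ 2 / (1 - alpha) by rewrite divr_ge0 ?sqr_ge0 // subr_ge0 ltW.
  have : 0 <= 2 * n * margin by rewrite !mulr_ge0 // ltW.
  rewrite /c2; lra.
pose M := (c1 + c2) / Delta.
have M_Delta : M * Delta = c1 + c2 by rewrite divfK // gt_eqF.
have M_ge0 : 0 <= M := divr_ge0 (addr_ge0 c1_ge0 c2_ge0) (ltW Delta_gt0).
have M_nonleader : c1 <= M * Delta by rewrite M_Delta lerDl.
have M_leader : c2 <= M * Delta by rewrite M_Delta lerDr.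
exact: le_lt_trans (Etau2_E2_le r_range alpha_gt0 alpha_lt1 M_ge0 r_gap
  margin_gt0 M_nonleader M_leader) (ltry _).
Qed.
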